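(* Let $\pi\in\mathfrak{B}_n$ and regard $\Omega'_B(\pi;x)$ as a polynomial in $x$. If $\pi(1)>0$ then $\Omega'_B(\pi;-x-1/2)=(-1)^n\,\Omega'_B(\pi;x-1/2)$. If $\pi(1)<0$ then $\Omega'_B(\pi;-x)=(-1)^n\,\Omega'_B(\pi;x)$.
   Context: $\mathfrak{B}_n$ is the group of signed permutations (bijections $\pi$ of $\{-n,\dots,n\}$ with $\pi(-i)=-\pi(i)$), written as words $(\pi(1),\dots,\pi(n))$, with $\pi(0)=0$. For an integer $k\ge0$ let $Z_k$ be the totally ordered set $0<\bar1<1<\bar2<2<\dots<\bar k<k$, with $0$ and unbarred $j$ ''plus-type'' and barred $\bar j$ ''minus-type''. $\Omega'_B(\pi;k)$ is the number of sequences $(a_1,\dots,a_n)\in Z_k^n$ such that, with $a_0=0$, $a_0\le a_1\le\dots\le a_n$ and for every $s\in\{0,\dots,n-1\}$: if $\pi(s)<\pi(s+1)$ then $a_s<a_{s+1}$ or ($a_s=a_{s+1}$ is plus-type); if $\pi(s)>\pi(s+1)$ then $a_s<a_{s+1}$ or ($a_s=a_{s+1}$ is minus-type). As a function of $k\ge0$ this agrees with a unique polynomial in $k$ with rational coefficients, denoted $\Omega'_B(\pi;x)$. *)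

From mathcomp Require Import all_boot all_order all_algebra.
Set Implicit Arguments. Unset Strict Implicit. Unset Printing Implicit Defensive.
Import Order.TTheory GRing.Theory Num.Theory.

(* A signed permutation pi in B_n is represented by its word
   (pi(1), ..., pi(n)) as a sequence of integers whose absolute values
   are a permutation of 1..n.  pi(0) = 0 by convention. *)
Definition is_signed_perm (n : nat) (w : seq int) : bool :=
  perm_eq [seq absz x | x <- w] (iota 1 n).

(* Z_k = {0 < 1bar < 1 < 2bar < 2 < ... < kbar < k} is encoded in 'I_(2k+1):
   0 |-> 0, jbar |-> 2j-1, j |-> 2j.  Order is the order of nat.
   Plus-type = even code, minus-type = odd code. *)
Definition Zk (k : nat) := 'I_(k.*2.+1).
Definition plus_type (c : nat) : bool := ~~ odd c.
Definition minus_type (c : nat) : bool := odd c.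

Definition omega_valid (n k : nat) (w : seq int) (a : n.-tuple (Zk k)) : bool :=
  let b := 0%N :: [seq val x | x <- a] in
  let p := 0%R :: w in
  [forall s : 'I_n,
     let x := nth 0%N b s in let y := nth 0%N b s.+1 in
     (x <= y)%N &&
     (if (nth 0%R p s < nth 0%R p s.+1)%R then (x < y)%N || ((x == y) && plus_type x)
      else if (nth 0%R p s > nth 0%R p s.+1)%R then (x < y)%N || ((x == y) && minus_type x)
      else true)].

Definition OmegaB' (n : nat) (w : seq int) (k : nat) : nat :=
  #|[pred a : n.-tuple (Zk k) | @omega_valid n k w a]|.

(* Read letter by letter, the number of admissible sequences whose last term is
   the code v obeys a transfer recursion: it is the sum of the numbers for all
   codes below v, plus the number for v itself when the step may repeat v, which
   depends only on the parity of v and on whether the step is an ascent or a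
   descent.  Grouping the codes into pairs (2t + s0, 2t + s0 + 1), with s0 = 1
   iff pi(1) < 0, each of these numbers becomes a function of t built from
   constants by discrete antiderivatives, hence a polynomial.  If f(-t-1) =
   sg f(t), the antiderivative F of f with F(0) = 0 satisfies F(-t) = -sg F(t);
   by induction on the word, exchanging the two codes of a pair is the
   reflection t |-> -t-1 up to the sign (-1)^(n-1).  Summing over the pairs
   below k, plus the unpaired top code 2k when pi(1) > 0, gives the two
   reciprocity laws. *)

From mathcomp Require Import all_boot all_order all_algebra.
From mathcomp Require Import ring zify.
Set Implicit Arguments. Unset Strict Implicit. Unset Printing Implicit Defensive.
Import Order.TTheory GRing.Theory Num.Theory.

Definition step_rel : rel (int * nat) := fun u v =>
  (u.2 <= v.2) &&
  (if (u.1 < v.1)%R then (u.2 < v.2) || (u.2 == v.2) && plus_type u.2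
   else if (u.1 > v.1)%R then (u.2 < v.2) || (u.2 == v.2) && minus_type u.2
   else true).

Lemma omega_valid_path n k w (a : n.-tuple (Zk k)) : size w = n ->
  omega_valid w a = path step_rel (0%R, 0) (zip w (map val a)).
Proof.
move=> size_w; have size_a : size (map val a) = n by rewrite size_map size_tuple.
have nth_zip0 i : nth (0%R, 0) ((0%R, 0) :: zip w (map val a)) i =
    (nth 0%R (0%R :: w) i, nth 0 (0 :: map val a) i).
  by rewrite -nth_zip //= size_w size_a.
have nth_zip1 i : nth (0%R, 0) (zip w (map val a)) i = (nth 0%R w i, nth 0 (map val a) i).
  by rewrite -nth_zip // size_w size_a.
rewrite /omega_valid; apply/forallP/(pathP (0%R, 0)); rewrite size_zip size_w size_a minnn.
  by move=> valid i lt_in; have := valid (Ordinal lt_in); rewrite nth_zip0 nth_zip1.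
by move=> valid i; have := valid i (ltn_ord i); rewrite nth_zip0 nth_zip1.
Qed.

Fixpoint seqs_below (M n : nat) : seq (seq nat) :=
  if n is n'.+1 then [seq rcons s x | s <- seqs_below M n', x <- index_iota 0 M]
  else [:: [::]].

Lemma mem_seqs_below M n s :
  (s \in seqs_below M n) = (size s == n) && all (fun x => x < M) s.
Proof.
elim: n s => [|n IHn] s; first by case: s.
case/lastP: s => [|s x].
  by apply/negbTE/allpairsP => -[[s' x'] /= [_ _ /(congr1 size)]]; rewrite size_rcons.
rewrite size_rcons eqSS all_rcons andbCA -IHn.
apply/allpairsP/andP => [[[s' x'] /= [s'_in x'_in /rcons_inj [-> ->]]] | [x_lt s_in]].
  by rewrite mem_index_iota in x'_in.
by exists (s, x); rewrite /= mem_index_iota.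
Qed.

Lemma uniq_seqs_below M n : uniq (seqs_below M n).
Proof.
elim: n => [|n IHn] //=; apply: allpairs_uniq => //; first exact: iota_uniq.
by move=> [s x] [s' x'] _ _ /= /rcons_inj [-> ->].
Qed.

Lemma last_seqs_below M n s : 0 < M -> s \in seqs_below M n -> last 0 s < M.
Proof.
move=> M_gt0; rewrite mem_seqs_below => /andP[_]; case/lastP: s => // s x.
by rewrite all_rcons last_rcons => /andP[].
Qed.

Lemma card_tuple_pred_val M n (P : pred (seq nat)) :
  #|[pred a : n.-tuple 'I_M | P (map val a)]| = \sum_(s <- seqs_below M n) P s.
Proof.
rewrite -sum1_card big_mkcond /=.
rewrite (eq_bigr (fun a : n.-tuple 'I_M => nat_of_bool (P (map val a)))); last first.
  by move=> a _; rewrite inE; case: (P _).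
rewrite -(big_map (fun a : n.-tuple 'I_M => map val a) xpredT (fun s => nat_of_bool (P s))).
apply/perm_big/uniq_perm; last 1 first.
- move=> s; rewrite mem_seqs_below; apply/mapP/idP => [[a _ ->] | /andP[/eqP size_s lt_sM]].
    by rewrite size_map size_tuple eqxx; apply/allP => _ /mapP[x _ ->]; exact: ltn_ord.
  have val_pmap : map val (pmap insub s : seq 'I_M) = s.
    rewrite (pmap_filter (@insubK _ _ _)) -[RHS]filter_predT.
    by apply: eq_in_filter => x /(allP lt_sM) x_lt; rewrite isSome_insub.
  have size_pmap : size (pmap insub s : seq 'I_M) == n.
    by rewrite -(size_map val) val_pmap size_s.
  by exists (Tuple size_pmap); rewrite ?mem_index_enum.
- by rewrite map_inj_uniq ?index_enum_uniq // => a b /(inj_map val_inj)/val_inj.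
- exact: uniq_seqs_below.
Qed.

Lemma sum_by_last M (L : seq (seq nat)) (a : pred (seq nat)) (b : nat -> bool) :
  {in L, forall s, last 0 s < M} ->
  \sum_(s <- L) (a s && b (last 0 s)) =
  \sum_(0 <= u < M) (\sum_(s <- L) (a s && (last 0 s == u))) * b u.
Proof.
move=> last_lt; under [RHS]eq_bigr do rewrite big_distrl.
rewrite exchange_big /= !big_seq; apply: eq_bigr => s /last_lt lt_sM.
rewrite (bigD1_seq (last 0 s)) ?iota_uniq ?mem_index_iota //= eqxx andbT mulnb.
by rewrite big1 ?addn0 // => u /negbTE; rewrite eq_sym => ->; rewrite andbF.
Qed.

(* [ends_count (rev w) v] is the number of valid (a_1, ..., a_n) for the word w
   with a_n = v; the word is read from its end so that the recursion on the last
   letter is structural. *)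
Fixpoint ends_count (r : seq int) (v : nat) : nat :=
  if r is p :: r' then
    \sum_(0 <= u < v.+1) ends_count r' u * step_rel (head 0%R r', u) (p, v)
  else v == 0.

Lemma last_zip (S T : Type) (x : S) (y : T) s t : size s = size t ->
  last (x, y) (zip s t) = (last x s, last y t).
Proof. by elim: s x y t => [|a s IHs] x y [|b t] //= [/IHs]. Qed.

Lemma ends_countE M w v : v < M ->
  \sum_(s <- seqs_below M (size w)) (path step_rel (0%R, 0) (zip w s) && (last 0 s == v)) =
  ends_count (rev w) v.
Proof.
elim/last_ind: w v => [|w p IHw] v lt_vM; first by rewrite big_seq1 eq_sym.
have head_rev : head 0%R (rev w) = last 0%R w.
  by case/lastP: w {IHw} => // w q; rewrite rev_rcons last_rcons.
rewrite size_rcons /= big_allpairs_dep rev_rcons /= head_rev big_seq.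
under eq_bigr => s.
  rewrite mem_seqs_below => /andP[/eqP size_s _].
  under eq_bigr do rewrite zip_rcons // rcons_path last_rcons last_zip //.
  rewrite (bigD1_seq v) ?iota_uniq ?mem_index_iota //= eqxx andbT.
  rewrite big1 ?addn0 => [|u /negbTE ->]; last by rewrite andbF.
  over.
rewrite -big_seq (@sum_by_last M _ (fun s => path step_rel (0%R, 0) (zip w s))
                   (fun u => step_rel (last 0%R w, u) (p, v))) => [|s]; last first.
  by apply: last_seqs_below; apply: leq_ltn_trans lt_vM.
rewrite (big_cat_nat _ (n := v.+1)) //= [X in _ + X]big1_seq ?addn0; last first.
  move=> u /andP[_]; rewrite mem_index_iota => /andP[lt_vu _].
  by rewrite /step_rel /= leqNgt lt_vu muln0.
rewrite !big_seq; apply: eq_bigr => u; rewrite mem_index_iota => /andP[_ lt_uv].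
by rewrite IHw // (leq_trans lt_uv).
Qed.

Lemma OmegaB'_ends_count n w k : size w = n ->
  OmegaB' n w k = \sum_(0 <= u < k.*2.+1) ends_count (rev w) u.
Proof.
move=> size_w; rewrite /OmegaB'.
set valid := fun s => path step_rel (0%R, 0) (zip w s).
rewrite (@eq_card _ _ [pred a : n.-tuple (Zk k) | valid (map val a) && true]); last first.
  by move=> a; rewrite !inE omega_valid_path // andbT.
rewrite (@card_tuple_pred_val _ _ (fun s => valid s && true)).
rewrite (@sum_by_last k.*2.+1 _ valid (fun=> true)).
  by apply: eq_big_nat => u /andP[_ lt_u]; rewrite muln1 -size_w ends_countE.
by move=> s; apply: last_seqs_below.
Qed.

Lemma ends_count1 p v : ends_count [:: p] v = step_rel (0%R, 0) (p, v).
Proof.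
rewrite /= big_ltn // mul1n big1_seq ?addn0 // => u /andP[_].
by rewrite mem_index_iota => /andP[/gtn_eqF ->].
Qed.

Lemma ends_count0 r : (last 0%R r < 0)%R -> ends_count r 0 = 0.
Proof.
elim: r => [|p [|q r] IHr] // neg_p; rewrite /= big_nat1.
  by rewrite /step_rel /= ltNge (ltW neg_p) neg_p.
by rewrite -/(ends_count (q :: r) 0) IHr.
Qed.

Lemma ends_count_cons2 p q r v : q != p ->
  ends_count [:: p, q & r] v =
  \sum_(0 <= u < v) ends_count (q :: r) u +
  (if (q < p)%R then ~~ odd v else odd v) * ends_count (q :: r) v.
Proof.
move=> neq_qp; rewrite [LHS]/= big_nat_recr //=; congr (_ + _).
  apply: eq_big_nat => u /andP[_ lt_uv].
  by rewrite /step_rel /= ltnW // lt_uv; case: ifP => _; [|case: ifP => _]; rewrite muln1.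
rewrite /step_rel /= leqnn ltnn eqxx /= /plus_type /minus_type mulnC.
by case: ifP => // not_lt; move: (lt_total neq_qp); rewrite not_lt => /= ->.
Qed.

Lemma sum_pairs (h : nat -> nat) (s0 : bool) t : (s0 -> h 0 = 0) ->
  \sum_(0 <= u < t.*2 + s0) h u = \sum_(s < t) (h (s.*2 + s0) + h (s.*2 + s0).+1).
Proof.
move=> h0; elim: t => [|t IHt].
  by case: s0 h0 => [h0|_]; rewrite ?big_nat1 ?h0 ?big_geq ?big_ord0.
by rewrite big_ord_recr /= -IHt doubleS !addSn !big_nat_recr //= addnA.
Qed.

(* The bit of the step from the letter q to the letter p says which code of a
   pair (2t + s0, 2t + s0 + 1) may be repeated: the even one after an ascent,
   the odd one after a descent. *)
Fixpoint step_bits (s0 : bool) (r : seq int) : seq bool :=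
  if r is p :: ((q :: _) as r') then (if (q < p)%R then s0 else ~~ s0) :: step_bits s0 r'
  else [::].

Lemma step_bits_cons2 s0 p q r : step_bits s0 [:: p, q & r] =
  (if (q < p)%R then s0 else ~~ s0) :: step_bits s0 (q :: r).
Proof. by []. Qed.

Lemma size_step_bits s0 r : size (step_bits s0 r) = (size r).-1.
Proof. by elim: r => [|p [|q r] IHr] //=; rewrite IHr. Qed.

Local Open Scope ring_scope.

Lemma int_step_const (T : Type) (F : int -> T) :
  (forall t, F (t + 1) = F t) -> forall t, F t = F 0.
Proof.
move=> FS; elim/int_rect => [//|m IHm|m IHm].
  by rewrite -IHm -[RHS]FS; congr F; lia.
by rewrite -IHm -[LHS]FS; congr F; lia.
Qed.

Section DiscreteAntiderivative.

Variable R : comPzRingType.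
Implicit Types (f F : int -> R) (sg : R).

Definition antidiff f (t : int) : R :=
  match t with
  | Posz m => \sum_(i < m) f i
  | Negz m => - \sum_(i < m.+1) f (Negz i)
  end.

Lemma antidiff0 f : antidiff f 0 = 0.
Proof. by rewrite /= big_ord0. Qed.

Lemma antidiff_nat f (m : nat) : antidiff f m = \sum_(i < m) f i.
Proof. by []. Qed.

Lemma antidiffS f t : antidiff f (t + 1) = antidiff f t + f t.
Proof.
case: t => [m|[|m]].
- by rewrite -PoszD addn1 /= big_ord_recr.
- by rewrite /= big_ord0 big_ord1 addNr.
- have -> : Negz m.+1 + 1 = Negz m by rewrite !NegzE; lia.
  by rewrite /= [in RHS]big_ord_recr /= opprD subrK.
Qed.

Lemma antidiff_unique f F : F 0 = 0 -> (forall t, F (t + 1) = F t + f t) ->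
  forall t, F t = antidiff f t.
Proof.
move=> F0 FS t; apply/eqP; rewrite -subr_eq0; apply/eqP.
rewrite (@int_step_const _ (fun t => F t - antidiff f t)) ?F0 ?antidiff0 ?subr0 // => s.
by rewrite FS antidiffS opprD addrACA subrr addr0.
Qed.

Lemma antidiffN f sg : (forall t, f (- t - 1) = sg * f t) ->
  forall t, antidiff f (- t) = - sg * antidiff f t.
Proof.
move=> f_sym t; apply/eqP; rewrite -subr_eq0 mulNr opprK; apply/eqP.
rewrite (@int_step_const _ (fun t => antidiff f (- t) + sg * antidiff f t)).
  by rewrite oppr0 antidiff0 mulr0 addr0.
move=> s /=; have shiftN : antidiff f (- s) = antidiff f (- s - 1) + f (- s - 1).
  by rewrite -antidiffS subrK.
by rewrite opprD shiftN antidiffS f_sym; ring.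
Qed.

Lemma antidiffN1 f sg : (forall t, f (- t - 1) = sg * f t) ->
  forall t, antidiff f (- t - 1) = - sg * (antidiff f t + f t).
Proof. by move=> f_sym t; rewrite -antidiffS -antidiffN // opprD. Qed.

End DiscreteAntiderivative.

Section BinomialCombinations.

Variable R : numFieldType.
Implicit Types (f g : int -> R) (x : R).

Definition binom (i : nat) x : R := (\prod_(j < i) (x - j%:R)) / i`!%:R.

Lemma binom0 x : binom 0 x = 1.
Proof. by rewrite /binom big_ord0 fact0 divr1. Qed.

Lemma binomS0 i : binom i.+1 0 = 0.
Proof. by rewrite /binom big_ord_recl subrr !mul0r. Qed.

Lemma binomD1 i x : binom i.+1 (x + 1) = binom i.+1 x + binom i x.
Proof.
rewrite /binom big_ord_recl big_ord_recr /= factS natrM.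
under eq_bigr => j _ do rewrite /bump /= add1n -natr1 opprD addrACA subrr addr0.
have fact_neq0 : i`!%:R != 0 :> R by rewrite pnatr_eq0 -lt0n fact_gt0.
have Si_neq0 : i.+1%:R != 0 :> R by rewrite pnatr_eq0.
rewrite -addn1 natrD in Si_neq0 *; field.
by rewrite fact_neq0 Si_neq0.
Qed.

Definition binom_poly (i : nat) : {poly R} := (i`!%:R)^-1 *: \prod_(j < i) ('X - j%:R%:P).

Lemma horner_binom_poly i x : (binom_poly i).[x] = binom i x.
Proof.
rewrite hornerZ horner_prod mulrC /binom; congr (_ * _).
by apply: eq_bigr => j _; rewrite hornerXsubC.
Qed.

(* The combinations of the functions t |-> binom i t are exactly the
   polynomial functions on the integers; unlike the latter they are
   visibly closed under [antidiff]. *)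
Definition binomial_comb f :=
  exists l : seq (R * nat), forall t, f t = \sum_(c <- l) c.1 * binom c.2 t%:~R.

Lemma binomial_comb_const c : binomial_comb (fun=> c).
Proof. by exists [:: (c, 0%N)] => t; rewrite big_seq1 binom0 mulr1. Qed.

Lemma binomial_combD f g : binomial_comb f -> binomial_comb g ->
  binomial_comb (fun t => f t + g t).
Proof. by move=> [l fE] [m gE]; exists (l ++ m) => t; rewrite big_cat fE gE. Qed.

Lemma binomial_comb_antidiff f : binomial_comb f -> binomial_comb (antidiff f).
Proof.
move=> [l fE]; exists [seq (c.1, c.2.+1) | c <- l] => t; rewrite big_map /=.
symmetry; apply: (antidiff_unique (F := fun s => \sum_(c <- l) c.1 * binom c.2.+1 s%:~R)).
  by rewrite big1 // => c _; rewrite binomS0 mulr0.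
by move=> s; rewrite fE -big_split; apply: eq_bigr => c _; rewrite intrD binomD1 mulrDr.
Qed.

Lemma binomial_comb_poly f : binomial_comb f -> exists P : {poly R}, forall t, f t = P.[t%:~R].
Proof.
move=> [l fE]; exists (\sum_(c <- l) c.1 *: binom_poly c.2) => t.
by rewrite fE horner_sum; apply: eq_bigr => c _; rewrite hornerZ horner_binom_poly.
Qed.

End BinomialCombinations.

(* [pair_count es q t] is the count [ends_count] at the code 2t + s0 + q
   (lemma [ends_count_pair]), given by a recursion that makes sense for all
   integers t. *)
Fixpoint pair_count (es : seq bool) (q : bool) (t : int) : rat :=
  if es is e :: es' then
    antidiff (fun s => pair_count es' false s + pair_count es' true s) t
    + (if q then pair_count es' false t else 0)
    + (if q == e then pair_count es' q t else 0)
  else 1.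

Definition pair_total (es : seq bool) (t : int) : rat :=
  pair_count es false t + pair_count es true t.

Lemma pair_count_cons e es q t : pair_count (e :: es) q t =
  antidiff (pair_total es) t + (if q then pair_count es false t else 0)
  + (if q == e then pair_count es q t else 0).
Proof. by []. Qed.

Lemma binomial_comb_pair_count es q : binomial_comb (pair_count es q).
Proof.
elim: es q => [|e es IHes] q; first exact: binomial_comb_const.
apply: binomial_combD; first apply: binomial_combD.
- by apply/binomial_comb_antidiff/binomial_combD.
- by case: q; [exact: IHes | exact: binomial_comb_const].
- by case: (q == e); [exact: IHes | exact: binomial_comb_const].
Qed.

Lemma pair_total_reflect_of es sg :
  (forall q t, pair_count es (~~ q) (- t - 1) = sg * pair_count es q t) ->
  forall t, pair_total es (- t - 1) = sg * pair_total es t.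
Proof.
move=> es_sym t; rewrite /pair_total -[false]/(~~ true) -[true]/(~~ false).
by rewrite !es_sym mulrDr addrC.
Qed.

Lemma pair_count_reflect es q t :
  pair_count es (~~ q) (- t - 1) = (-1) ^+ size es * pair_count es q t.
Proof.
elim: es q t => [|e es IHes] q t; first by rewrite mul1r.
have total_sym := pair_total_reflect_of IHes.
rewrite !pair_count_cons (antidiffN1 total_sym) /pair_total exprS.
have IHf := IHes false t; have IHt := IHes true t; rewrite /= in IHf IHt.
set sg := (-1) ^+ size es in IHf IHt *.
by case: q e => -[] /=; rewrite ?IHf ?IHt;
  move: (antidiff _ t) (pair_count es false t) (pair_count es true t) => A pf pt; ring.
Qed.

Lemma pair_total_reflect es t :
  pair_total es (- t - 1) = (-1) ^+ size es * pair_total es t.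
Proof. exact/pair_total_reflect_of/pair_count_reflect. Qed.

(* The codes 0, ..., 2k are the pairs t < k, plus the unpaired code 2k when
   s0 = false; when s0 = true the code 0 is unreachable. *)
Definition omega_fun (s0 : bool) (es : seq bool) (t : int) : rat :=
  antidiff (pair_total es) t + (if s0 then 0 else pair_count es false t).

Lemma binomial_comb_omega_fun s0 es : binomial_comb (omega_fun s0 es).
Proof.
apply: binomial_combD.
  by apply/binomial_comb_antidiff/binomial_combD; exact: binomial_comb_pair_count.
by case: s0; [exact: binomial_comb_const | exact: binomial_comb_pair_count].
Qed.

Lemma omega_funN1 es t :
  omega_fun false es (- t - 1) = (-1) ^+ (size es).+1 * omega_fun false es t.
Proof.
rewrite /omega_fun (antidiffN1 (@pair_total_reflect es)) /pair_total exprS.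
have := pair_count_reflect es true t; rewrite /= => ->.
by move: (antidiff _ t) (pair_count es false t) (pair_count es true t) => A pf pt; ring.
Qed.

Lemma omega_funN es t :
  omega_fun true es (- t) = (-1) ^+ (size es).+1 * omega_fun true es t.
Proof. by rewrite /omega_fun (antidiffN (@pair_total_reflect es)) !addr0 exprS mulN1r. Qed.

Lemma sum_paired_codes (g : nat -> nat) (s0 : bool) es t (qb : bool) : (s0 -> g 0 = 0)%N ->
  (forall t (qb : bool), (g (t.*2 + s0 + qb)%N)%:R = pair_count es qb t) ->
  (\sum_(0 <= u < t.*2 + s0 + qb) g u)%:R =
  antidiff (pair_total es) t + if qb then pair_count es false t else 0.
Proof.
move=> g0 gE; have -> : \sum_(0 <= u < t.*2 + s0 + qb) g u =
    (\sum_(0 <= u < t.*2 + s0) g u + qb * g (t.*2 + s0))%N.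
  by case: qb; rewrite ?addn1 ?big_nat_recr //= ?addn0 ?mul0n ?mul1n ?addn0.
rewrite sum_pairs // natrD natr_sum antidiff_nat; congr (_ + _).
  by apply: eq_bigr => s _; rewrite /pair_total -(gE s false) -(gE s true) addn0 addn1 natrD.
by case: qb; rewrite ?mul0n // mul1n -(gE t false) addn0.
Qed.

Lemma ends_count_pair s0 p r t (qb : bool) : uniq (p :: r) -> 0 \notin p :: r ->
  s0 = (last 0 (p :: r) < 0) ->
  (ends_count (p :: r) (t.*2 + s0 + qb)%N)%:R = pair_count (step_bits s0 (p :: r)) qb t.
Proof.
elim: r p t qb => [|q r IHr] p t qb uniq_pr nz_pr s0E.
  rewrite ends_count1 /step_rel /= in s0E *; have [p_neg|p_pos] := ltP p 0%R.
    by rewrite s0E p_neg ltNge (ltW p_neg) /= addn1 addSn.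
  have p_gt0 : (0 < p)%R.
    by rewrite lt_def p_pos andbT eq_sym; apply: contraNneq nz_pr => ->; rewrite mem_head.
  by rewrite p_gt0; case: (_ + _ + _)%N.
move: uniq_pr nz_pr => /andP[p_notin uniq_qr] nz_pr.
have neq_qp : q != p by apply: contraNneq p_notin => ->; rewrite mem_head.
have nz_qr : 0%R \notin q :: r by apply: contra nz_pr => z_in; rewrite inE z_in orbT.
have pairE t' qb' := IHr q t' qb' uniq_qr nz_qr s0E.
rewrite ends_count_cons2 // step_bits_cons2 pair_count_cons natrD.
rewrite (sum_paired_codes _ _ _ pairE) => [|s0_true]; last by apply: ends_count0; rewrite -s0E.
have -> : odd (t.*2 + s0 + qb) = s0 (+) qb by rewrite !oddD odd_double !oddb.
rewrite -(pairE t qb) natrM; congr (_ + _).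
by case: (q < p); case: s0 {IHr s0E pairE}; case: qb; rewrite ?mul1r ?mul0r.
Qed.

Lemma OmegaB'_omega_fun n w k : size w = n -> uniq w -> 0 \notin w -> w != [::] ->
  (OmegaB' n w k)%:R = omega_fun (nth 0 w 0 < 0) (step_bits (nth 0 w 0 < 0) (rev w)) k.
Proof.
move=> size_w uniq_w nz_w w_nnil; rewrite OmegaB'_ends_count // /omega_fun -if_neg.
have s0E : (nth 0 w 0 < 0) = (last 0 (rev w) < 0).
  by case: w {size_w uniq_w nz_w w_nnil} => // p w; rewrite rev_cons last_rcons.
have -> : k.*2.+1 = (k.*2 + (nth 0 w 0 < 0)%R + ~~ (nth 0 w 0 < 0)%R)%N.
  by case: (_ < _)%R; rewrite ?addn0 ?addn1.
case rev_w: (rev w) s0E => [|p r] s0E; first by rewrite -(revK w) rev_w in w_nnil.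
have uniq_pr : uniq (p :: r) by rewrite -rev_w rev_uniq.
have nz_pr : 0 \notin p :: r by rewrite -rev_w mem_rev.
apply: sum_paired_codes => [s0_neg|t qb]; first by apply: ends_count0; rewrite -s0E.
exact: ends_count_pair.
Qed.

Lemma OmegaB'_nil k : OmegaB' 0 [::] k = 1%N.
Proof.
rewrite OmegaB'_ends_count // big_ltn // big1_seq ?addn0 // => u /andP[_].
by rewrite mem_index_iota => /andP[/gtn_eqF u_neq0]; rewrite /= u_neq0.
Qed.

Lemma signed_perm_uniq n w : is_signed_perm n w -> uniq w.
Proof. by move=> perm_w; apply: (@map_uniq _ _ absz); rewrite (perm_uniq perm_w) iota_uniq. Qed.

Lemma signed_perm_neq0 n w : is_signed_perm n w -> 0 \notin w.
Proof. by move=> perm_w; apply/negP => /(map_f absz); rewrite (perm_mem perm_w) mem_iota. Qed.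

Lemma OmegaB'_poly n w : size w = n -> is_signed_perm n w ->
  exists2 Q : {poly rat}, (forall k : nat, Q.[k%:R] = (OmegaB' n w k)%:R) &
    (0 < nth 0 w 0 -> forall t : int, Q.[(- t - 1)%:~R] = (-1) ^+ n * Q.[t%:~R]) /\
    (nth 0 w 0 < 0 -> forall t : int, Q.[(- t)%:~R] = (-1) ^+ n * Q.[t%:~R]).
Proof.
case: n => [|n] size_w perm_w.
  have -> : w = [::] by apply/eqP; rewrite -size_eq0 size_w.
  by exists 1 => [k|]; rewrite ?hornerC ?OmegaB'_nil ?ltxx.
have w_nnil : w != [::] by rewrite -size_eq0 size_w.
set s0 := nth 0 w 0 < 0; set es := step_bits s0 (rev w).
have [Q QE] := binomial_comb_poly (binomial_comb_omega_fun s0 es).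
have size_es : (size es).+1 = n.+1 by rewrite size_step_bits size_rev size_w.
have uniq_w := signed_perm_uniq perm_w; have nz_w := signed_perm_neq0 perm_w.
exists Q => [k|]; first by rewrite [k%:R]pmulrn -QE OmegaB'_omega_fun.
split=> [w0_gt0|w0_lt0] t; rewrite -!QE -size_es.
  have -> : s0 = false by rewrite /s0 ltNge ltW.
  exact: omega_funN1.
by have -> : s0 = true by []; rewrite omega_funN.
Qed.

Lemma poly_eq_on_nat (R : numDomainType) (c : R) (P Q : {poly R}) :
  (forall k : nat, P.[k%:R + c] = Q.[k%:R + c]) -> P = Q.
Proof.
move=> PQ; apply/eqP; rewrite -subr_eq0; apply/eqP.
apply: (@roots_geq_poly_eq0 _ _ [seq k%:R + c | k <- iota 0 (size (P - Q))]).
- by apply/allP => _ /mapP[k _ ->]; rewrite /root hornerD hornerN PQ subrr.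
- by rewrite map_inj_uniq ?iota_uniq // => a b /addIr/eqP; rewrite eqr_nat => /eqP.
- by rewrite size_map size_iota.
Qed.

Lemma comp_reflect_half (Q : {poly rat}) sg :
  (forall t : int, Q.[(- t - 1)%:~R] = sg * Q.[t%:~R]) ->
  Q \Po (- 'X - 2^-1%:P) = sg *: (Q \Po ('X - 2^-1%:P)).
Proof.
move=> Q_sym; apply: (poly_eq_on_nat (c := 2^-1)) => k.
rewrite hornerZ !horner_comp !hornerE addrK [k%:R]pmulrn -Q_sym.
by congr Q.[_]; rewrite intrB intrN; field.
Qed.

Lemma comp_reflect (Q : {poly rat}) sg :
  (forall t : int, Q.[(- t)%:~R] = sg * Q.[t%:~R]) -> Q \Po (- 'X) = sg *: Q.
Proof.
move=> Q_sym; apply: (poly_eq_on_nat (c := 0)) => k.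
by rewrite addr0 hornerZ horner_comp !hornerE [k%:R]pmulrn -Q_sym intrN.
Qed.

Theorem proposition4p13 (n : nat) (w : seq int) :
  size w = n -> is_signed_perm n w ->
  (exists P : {poly rat}, forall k : nat, P.[k%:R] = (OmegaB' n w k)%:R) /\
  (forall P : {poly rat}, (forall k : nat, P.[k%:R] = (OmegaB' n w k)%:R) ->
     (0 < nth 0 w 0 ->
        P \Po (- 'X - (2%:R)^-1%:P) = (-1) ^+ n *: (P \Po ('X - (2%:R)^-1%:P))) /\
     (nth 0 w 0 < 0 ->
        P \Po (- 'X) = (-1) ^+ n *: P)).
Proof.
move=> size_w perm_w; have [Q QE [Q_pos Q_neg]] := OmegaB'_poly size_w perm_w.
split=> [|P PE]; first by exists Q.
have -> : P = Q by apply: (poly_eq_on_nat (c := 0)) => k; rewrite addr0 PE QE.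
by split=> [/Q_pos/comp_reflect_half | /Q_neg/comp_reflect].
Qed.
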